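(* In the setting described in the context, assume (B), (B1) and (B2). Then the map $\epsilon\mapsto L_{\mathbb P_\epsilon}h_0$ is differentiable at $\epsilon=0$ as a $C^1(X)$-valued map.
   Context: $X$ is a compact interval with normalized Lebesgue measure $m$; $\Omega$ a measurable space; for each $\omega$, $T_\omega\colon X\to X$ has a finite or countable family of branches indexed by a common set $Z$ on open intervals partitioning $X$ mod $0$, each $C^3$ and onto $X$, with inverse branches $g_{z,\omega}$. $\{\mathbb P_\epsilon\}_{\epsilon\in V}$ are probability measures on $\Omega$, $V$ a neighbourhood of $0$; $L_{\mathbb P_\epsilon}\Phi=\int_\Omega\sum_z\Phi\circ g_{z,\omega}|g'_{z,\omega}|\,d\mathbb P_\epsilon(\omega)$. For $\Phi\in L^1(X)$, $\psi_z(\epsilon,x)=\int_\Omega[\Phi\circ g_{z,\omega}|g'_{z,\omega}|](x)\,d\mathbb P_\epsilon(\omega)$, $\psi^{(0)}_z=\psi_z$, $\psi^{(1)}_z=\partial_x\psi_z$. (B): $L_{\mathbb P_\epsilon}$ has a uniform spectral gap on $C^1$ (there are $\theta\in(0,1)$, $C>0$ independent of $\epsilon$ with $\|L^n_{\mathbb P_\epsilon}\phi\|_{C^1}\le C\theta^n\|\phi\|_{C^1}$ for zero-average $\phi$), and the system has a unique stationary density $h_\epsilon\in C^2$ (i.e. $L_{\mathbb P_\epsilon}h_\epsilon=h_\epsilon$, $h_\epsilon\ge0$, $\int h_\epsilon dm=1$). (B1): for $\Phi=h_0$, $\partial_\epsilon\psi_z,\partial_x\psi_z,\partial_x\partial_\epsilon\psi_z,\partial_\epsilon\partial_x\psi_z$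 exist and are jointly continuous on $V\times X$, and $\sum_z\sup_{\epsilon\in V}\sup_{x}|\partial_\epsilon\psi^{(i)}_z(\epsilon,x)|<\infty$ for $i=0,1$. (B2): for every $\Phi\in C^1$, $\psi_z$ and $\partial_x\psi_z$ exist and are jointly continuous, and $\sum_z\sup_{\epsilon}\sup_x|\psi^{(i)}_z(\epsilon,x)|<\infty$ for $i=0,1$. *)

From HB Require Import structures.
From mathcomp Require Import all_boot all_order all_algebra.
From mathcomp Require Import all_classical all_reals all_analysis.
Set Implicit Arguments. Unset Strict Implicit. Unset Printing Implicit Defensive.
Import Order.TTheory GRing.Theory Num.Theory.
Import numFieldNormedType.Exports.
Local Open Scope classical_set_scope.
Local Open Scope ring_scope.

Section Defs.
Variable R : realType.

Definition Ck_fam (D : set R) (k : nat) (fs : nat -> R -> R) : Prop :=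
  (forall i, (i <= k)%N -> {within D, continuous (fs i)}) /\
  (forall i, (i < k)%N -> forall x, D° x -> is_derive x 1 (fs i) (fs i.+1 x)).

(** f is of class C^k on D (for D = [a,b]: C^k up to the boundary). *)
Definition Ck_on (D : set R) (k : nat) (f : R -> R) : Prop :=
  exists fs : nat -> R -> R, fs 0%N = f /\ Ck_fam D k fs.

Definition C1norm (a b : R) (f : R -> R) : R :=
  sup [set `|f x| | x in `[a, b]] + sup [set `|derive1 f x| | x in `]a, b[].

(** Sum over the (finite or countable) index set Z, taken as a subset of nat. *)
Definition sumZ (Z : set nat) (u : nat -> R) : R :=
  limn (series (fun n => if n \in Z then u n else 0)).

Definition summableZ (Z : set nat) (u : nat -> R) : Prop :=
  cvgn (series (fun n => if n \in Z then u n else 0)).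

Context {d : measure_display} {Omega : measurableType d}.

(** Transfer operator L_P Phi (x) = int_Omega sum_z Phi(g_{z,w} x) |g'_{z,w}(x)| dP(w),
    where [g1 z w] is the derivative of the inverse branch [g z w]. *)
Definition Lop (P : probability Omega R) (Z : set nat)
    (g g1 : nat -> Omega -> R -> R) (Phi : R -> R) (x : R) : R :=
  \int[P]_(w in setT) sumZ Z (fun z => Phi (g z w x) * `|g1 z w x|).

Definition psi (P : R -> probability Omega R)
    (g g1 : nat -> Omega -> R -> R) (Phi : R -> R) (z : nat) (e x : R) : R :=
  \int[P e]_(w in setT) (Phi (g z w x) * `|g1 z w x|).

End Defs.

From HB Require Import structures.
From mathcomp Require Import all_boot all_order all_algebra.
From mathcomp Require Import all_classical all_reals all_analysis.
From mathcomp Require Import measurable_realfun ring.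
Import Order.TTheory GRing.Theory Num.Theory.
Import numFieldNormedType.Exports.
Local Open Scope classical_set_scope.
Local Open Scope ring_scope.

(* Integrating the nonnegative terms one at a time (monotone convergence),
   L_{P_eps} h_0 = sum_z psi_z(eps, .) on [a, b], so the candidate derivative
   is D = sum_z d_eps psi_z(0, .).  By the mean value theorem in eps, each
   (psi_z(eps, .) - psi_z(0, .)) / eps - d_eps psi_z(0, .) equals
   d_eps psi_z(c, .) - d_eps psi_z(0, .) for some c between 0 and eps: it is
   dominated by 2 M0_z and, by uniform continuity on compacts, tends to 0
   uniformly on [a, b]; Tannery's theorem sums these estimates.  The same
   argument for d_x psi_z controls the x-derivatives, once Schwarz's theorem
   identifies d_eps d_x psi_z with d_x d_eps psi_z. *)

Set Implicit Arguments. Unset Strict Implicit.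

Section sumZ_theory.
Variable R : realType.
Implicit Types (Z : set nat) (u v w M : nat -> R).

Definition restrZ Z u n : R := if n \in Z then u n else 0.

Lemma restrZB Z u v : restrZ Z (fun z => u z - v z) = restrZ Z u - restrZ Z v.
Proof. by apply/funext => n; rewrite /restrZ !fctE; case: ifP; rewrite ?subr0. Qed.

Lemma restrZMr Z u t : restrZ Z (fun z => u z * t) = t *: restrZ Z u.
Proof.
by apply/funext => n; rewrite /restrZ !fctE; case: ifP => _; rewrite ?scaler0 // mulrC.
Qed.

Lemma normr_restrZ_le Z u M : (forall z, Z z -> `|u z| <= M z) ->
  forall n, `|restrZ Z u n| <= restrZ Z M n.
Proof. by move=> uM n; rewrite /restrZ; case: ifPn => [/set_mem/uM|_] //; rewrite normr0. Qed.

Lemma cvg_series_norm_le u v :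
  (forall n, `|u n| <= v n) -> cvgn (series v) -> cvgn (series u).
Proof.
move=> uv cv; apply: normed_cvg; apply: (series_le_cvg _ _ uv cv) => n //.
exact: le_trans (normr_ge0 _) (uv n).
Qed.

Lemma summableZ_le Z u M :
  (forall z, Z z -> `|u z| <= M z) -> summableZ Z M -> summableZ Z u.
Proof. by move=> /normr_restrZ_le; exact: cvg_series_norm_le. Qed.

Lemma summableZB Z u v : summableZ Z u -> summableZ Z v ->
  summableZ Z (fun z => u z - v z).
Proof. by rewrite /summableZ -!/(restrZ Z _) restrZB; exact: is_cvg_seriesB. Qed.

Lemma sumZB Z u v : summableZ Z u -> summableZ Z v ->
  sumZ Z (fun z => u z - v z) = sumZ Z u - sumZ Z v.
Proof. by rewrite /summableZ /sumZ -!/(restrZ Z _) restrZB; exact: lim_seriesB. Qed.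

Lemma summableZMr Z u t : summableZ Z u -> summableZ Z (fun z => u z * t).
Proof. by rewrite /summableZ -!/(restrZ Z _) restrZMr; exact: is_cvg_seriesZ. Qed.

Lemma sumZMr Z u t : summableZ Z u -> sumZ Z (fun z => u z * t) = sumZ Z u * t.
Proof.
by rewrite /summableZ /sumZ -!/(restrZ Z _) restrZMr mulrC => /lim_seriesZ ->.
Qed.

Lemma sumZ_quotB Z u v w t : summableZ Z u -> summableZ Z v -> summableZ Z w ->
  sumZ Z (fun z => (u z - v z) / t - w z) = (sumZ Z u - sumZ Z v) / t - sumZ Z w.
Proof.
move=> su sv sw; have suv := summableZB su sv.
by rewrite sumZB ?sumZMr ?sumZB //; exact: summableZMr.
Qed.

Lemma ler_norm_series_tail u v N : (forall n, `|u n| <= v n) -> cvgn (series v) ->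
  `|limn (series u) - series u N| <= limn (series v) - series v N.
Proof.
move=> uv cv; have cu := cvg_series_norm_le uv cv.
have tail_u : (fun n => series u n - series u N) @ \oo --> limn (series u) - series u N.
  exact: cvgB cu (cvg_cst _).
have tail_v : (fun n => series v n - series v N) @ \oo --> limn (series v) - series v N.
  exact: cvgB cv (cvg_cst _).
rewrite -(cvg_lim _ (cvg_norm tail_u)) // -(cvg_lim _ tail_v) //.
apply: ler_lim; [exact: cvgP (cvg_norm tail_u) | exact: cvgP tail_v |].
near=> n; have Nn : (N <= n)%N by near: n; exists N.
rewrite !sub_series_geq //; apply: le_trans (ler_norm_sum _ _ _) _.
exact: ler_sum.
Unshelve. all: by end_near.
Qed.

Lemma tannery_unif (S X : Type) (F : set_system S) {FF : Filter F} (A : set X) Z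
    (q : S -> nat -> X -> R) M :
  summableZ Z M ->
  (\forall s \near F, forall z x, Z z -> A x -> `|q s z x| <= M z) ->
  (forall z, Z z -> forall e, 0 < e -> \forall s \near F, forall x, A x -> `|q s z x| <= e) ->
  forall e, 0 < e -> \forall s \near F, forall x, A x -> `|sumZ Z (fun z => q s z x)| <= e.
Proof.
move=> sM qM q0 e e0; have e20 : 0 < e / 2 by rewrite divr_gt0.
have cM : series (restrZ Z M) @ \oo --> limn (series (restrZ Z M)) by [].
have /cvgr_dist_le/(_ _ e20)[N _ tailN] := cM.
pose e' := e / 2 / N.+1%:R; have e'0 : 0 < e' by rewrite !divr_gt0.
have e'N : e' *+ N <= e / 2.
  by rewrite /e' -mulr_natr mulrAC ler_pdivrMr ?ltr0n // ler_wpM2l ?ler_nat // ltW.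
have head0 : \forall s \near F, forall i : 'I_N, forall x, A x ->
    `|restrZ Z (fun z => q s z x) i| <= e'.
  apply: filter_forall => i; rewrite /restrZ.
  case: (boolP (nat_of_ord i \in Z)) => [/set_mem Zi|_]; first exact: q0.
  by apply: nearW => s x _; rewrite normr0 ltW.
near=> s => x Ax.
have qMs : forall z x, Z z -> A x -> `|q s z x| <= M z by near: s.
have head0s : forall i : 'I_N, forall x, A x -> `|restrZ Z (fun z => q s z x) i| <= e'.
  by near: s.
have qsM := normr_restrZ_le (fun z Zz => qMs z x Zz Ax).
rewrite -(subrK (series (restrZ Z (fun z => q s z x)) N) (sumZ Z _)).
apply: le_trans (ler_normD _ _) _; rewrite [leRHS](splitr e) addrC lerD //.
  rewrite /series /= big_mkord; apply: le_trans (ler_norm_sum _ _ _) _.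
  apply: le_trans (ler_sum _ (fun i _ => head0s i x Ax)) _.
  by rewrite sumr_const card_ord.
apply: le_trans (ler_norm_series_tail N qsM sM) _.
exact: le_trans (ler_norm _) (tailN N (leqnn N)).
Unshelve. all: by end_near.
Qed.

Lemma tannery (S : Type) (F : set_system S) {FF : Filter F} Z (q : S -> nat -> R) M :
  summableZ Z M -> (\forall s \near F, forall z, Z z -> `|q s z| <= M z) ->
  (forall z, Z z -> q s z @[s --> F] --> 0) ->
  sumZ Z (q s) @[s --> F] --> 0.
Proof.
move=> sM qM q0; apply/cvgrPdist_le => e e0.
have qM' : \forall s \near F, forall z (t : unit), Z z -> setT t -> `|q s z| <= M z.
  by apply: filterS qM => s qs z _ Zz _; exact: qs.
have q0' z : Z z -> forall e1, 0 < e1 ->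
    \forall s \near F, forall t : unit, setT t -> `|q s z| <= e1.
  move=> Zz e1 e10; have /cvgr_dist_le/(_ _ e10) := q0 z Zz.
  by apply: filterS => s; rewrite sub0r normrN => qs _ _.
have sq := tannery_unif (A := [set: unit]) (q := fun s z _ => q s z) sM qM' q0' e0.
near=> s; rewrite sub0r normrN.
suff /(_ tt I) : forall t : unit, setT t -> `|sumZ Z (q s)| <= e by [].
by near: s; exact: sq.
Unshelve. all: by end_near.
Qed.

End sumZ_theory.

Section real_analysis.
Variable R : realType.

Lemma within_continuousP {T : topologicalType} (A : set T) (f : T -> R) :
  {within A, continuous f} <->
  forall x, A x -> forall e, 0 < e -> \forall y \near x, A y -> `|f y - f x| <= e.
Proof.
split=> [cf x Ax e e0|near_f].
  have /cvgr_dist_le/(_ e e0)/(nbhs_subspace_ex _ Ax)[W nW WA] := cf x.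
  apply: filterS nW => y Wy Ay; have : (W `&` A) y by [].
  by rewrite -WA => -[fy _]; rewrite distrC.
rewrite continuous_subspace_in => x /set_mem Ax; apply/cvgrPdist_le => e e0.
apply/(nbhs_subspace_ex _ Ax); exists [set y | A y -> `|f y - f x| <= e].
  exact: near_f.
apply/seteqP; split => y [fy Ay]; split => //; first by move=> _; rewrite distrC.
by rewrite distrC; exact: fy.
Qed.

Lemma continuous_within_slice (V I : set R) (f : R -> R -> R) s :
  {within V `*` I, continuous (fun p => f p.1 p.2)} -> V s ->
  {within I, continuous (f s)}.
Proof.
move=> /within_continuousP cf Vs; apply/within_continuousP => x Ix e e0.
have [[A B] /= [nA nB] AB] := cf (s, x) (conj Vs Ix) e e0.
apply: filterS nB => y By Iy.
exact: (AB (s, y) (conj (nbhs_singleton nA) By) (conj Vs Iy)).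
Qed.

Lemma cvg_slice_uniform (V I : set R) (f : R -> R -> R) s0 :
  nbhs s0 V -> compact I -> {within V `*` I, continuous (fun p => f p.1 p.2)} ->
  forall e, 0 < e -> \forall s \near s0, forall x, I x -> `|f s x - f s0 x| <= e.
Proof.
move=> V0 /compact_near_coveringP cov /within_continuousP cf e e0.
pose P s x := I x -> `|f s x - f s0 x| <= e.
suff : \forall s \near s0, I `<=` P s.
  by apply: filterS => s IP y Iy; apply: (IP y Iy).
apply: (cov R (nbhs s0) P) => x Ix.
have e20 : 0 < e / 2 by rewrite divr_gt0.
have [[A B] /= [nA nB] AB] := cf (s0, x) (conj (nbhs_singleton V0) Ix) _ e20.
exists (B, A `&` V) => /=; first by split => //; exact: filterI.
case=> y s /= [By [As Vs]] Iy.
have fsy := AB (s, y) (conj As By) (conj Vs Iy).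
have fs0y := AB (s0, y) (conj (nbhs_singleton nA) By) (conj (nbhs_singleton V0) Iy).
rewrite -(subrK (f s0 x) (f s y)) -addrA; apply: le_trans (ler_normD _ _) _.
by rewrite [leRHS](splitr e) lerD // distrC.
Qed.

Lemma is_derive_quotientP (f : R -> R) (x df : R) :
  is_derive x 1 f df <-> (fun h => (f (h + x) - f x) / h) @ 0^' --> df.
Proof.
have -> : (fun h => (f (h + x) - f x) / h) =
    (fun h => h^-1 *: ((f \o shift x) (h *: 1) - f x)).
  by apply/funext => h /=; rewrite /shift scaler1 mulrC.
split=> [[dH <-] //|qf]; apply: DeriveDef; first by apply/cvg_ex; exists df.
exact: cvg_lim.
Qed.

Lemma MVT_is_derive (f df : R -> R) (U : set R) u v : u < v -> `[u, v]%classic `<=` U ->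
  (forall y, U y -> is_derive y 1 f (df y)) ->
  exists2 c, `]u, v[%classic c & f v - f u = df c * (v - u).
Proof.
move=> uv uvU fU; apply: MVT => // [y /subset_itv_oo_cc/uvU/fU //|].
apply: derivable_within_continuous => y /uvU/fU.
by case.
Qed.

Lemma MVT_dist (f df : R -> R) (u v : R) :
  (forall y, `|y - u| <= `|v - u| -> is_derive y 1 f (df y)) ->
  exists c, `|c - u| <= `|v - u| /\ f v - f u = df c * (v - u).
Proof.
move=> fd; have [uv|vu|<-] := ltgtP u v; last by exists u; rewrite !subrr mulr0.
- have uvU : `[u, v]%classic `<=` [set y | `|y - u| <= `|v - u|].
    move=> y /=; rewrite in_itv /= => /andP[uy yv].
    by rewrite !ger0_norm ?subr_ge0 ?lerD2r // (le_trans uy yv).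
  have [c /subset_itv_oo_cc/uvU cu E] := MVT_is_derive uv uvU fd.
  by exists c.
- have vuU : `[v, u]%classic `<=` [set y | `|y - u| <= `|v - u|].
    move=> y /=; rewrite in_itv /= => /andP[vy yu].
    by rewrite !ler0_norm ?subr_le0 ?lerN2 ?lerD2r // (le_trans vy yu).
  have [c /subset_itv_oo_cc/vuU cu E] := MVT_is_derive vu vuU fd.
  by exists c; rewrite -[f v - f u]opprB E -mulrN opprB.
Qed.

End real_analysis.

Section termwise.
Variable R : realType.
Implicit Types (Z : set nat) (M : nat -> R).

Lemma nbhs_dist_lt (U : set R) x :
  nbhs x U -> exists2 r, 0 < r & forall y, `|y - x| < r -> U y.
Proof.
move=> /nbhs_ballP[r r0 rU]; exists r => // y xy; apply: rU.
by rewrite /ball /= distrC.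
Qed.

Lemma ler_normB_mul2 (a b m : R) : `|a| <= m -> `|b| <= m -> `|a - b| <= m * 2.
Proof.
by move=> am bm; rewrite mulr_natr mulr2n; apply: le_trans (ler_normB _ _) (lerD _ _).
Qed.

Lemma is_derive_sumZ Z (U : set R) (phi dphi : nat -> R -> R) M0 M1 x :
  nbhs x U -> summableZ Z M0 -> summableZ Z M1 ->
  (forall z y, Z z -> U y -> `|phi z y| <= M0 z) ->
  (forall z y, Z z -> U y -> is_derive y 1 (phi z) (dphi z y)) ->
  (forall z y, Z z -> U y -> `|dphi z y| <= M1 z) ->
  is_derive x 1 (fun y => sumZ Z (phi ^~ y)) (sumZ Z (dphi ^~ x)).
Proof.
move=> Ux sM0 sM1 phiM0 phid dphiM1; have [r r0 rU] := nbhs_dist_lt Ux.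
have {}Ux := nbhs_singleton Ux.
pose q h z := (phi z (h + x) - phi z x) / h - dphi z x.
have q0 : (fun h => sumZ Z (q h)) @ 0^' --> 0.
  apply: (tannery (M := fun z => M1 z * 2)); first exact: summableZMr.
    near=> h => z Zz; have h0 : h != 0 by near: h; exact: nbhs_dnbhs_neq.
    have hr : `|h| < r by near: h; exact: dnbhs0_lt.
    have Uy y : `|y - x| <= `|h + x - x| -> U y.
      by rewrite addrK => yx; apply: rU; exact: le_lt_trans yx hr.
    rewrite /q; have [c [cx ->]] := MVT_dist (fun y yx => phid z y Zz (Uy y yx)).
    by rewrite addrK mulfK // ler_normB_mul2 //; apply: dphiM1 => //; exact: Uy.
  move=> z Zz; suff : q h z @[h --> 0^'] --> dphi z x - dphi z x by rewrite subrr.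
  by apply: cvgB (cvg_cst _); apply/is_derive_quotientP; exact: phid.
suff E : \forall h \near 0^', sumZ Z (q h) + sumZ Z (dphi ^~ x) =
    (sumZ Z (phi ^~ (h + x)) - sumZ Z (phi ^~ x)) / h.
  apply/is_derive_quotientP; apply: cvg_trans (near_eq_cvg E) _.
  suff : (fun h => sumZ Z (q h) + sumZ Z (dphi ^~ x)) @ 0^' -->
      0 + sumZ Z (dphi ^~ x) by rewrite add0r.
  exact: cvgD q0 (cvg_cst _).
near=> h; have hr : `|h| < r by near: h; exact: dnbhs0_lt.
have Uhx : U (h + x) by apply: rU; rewrite addrK.
have sphi y : U y -> summableZ Z (phi ^~ y).
  by move=> Uy; apply: summableZ_le sM0 => z Zz; exact: phiM0.
have sdphi : summableZ Z (dphi ^~ x).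
  by apply: summableZ_le sM1 => z Zz; exact: dphiM1.
by rewrite /q sumZ_quotB ?subrK //; apply: sphi.
Unshelve. all: by end_near.
Qed.

Lemma continuous_sumZ Z (I : set R) (u : nat -> R -> R) M :
  summableZ Z M -> (forall z y, Z z -> I y -> `|u z y| <= M z) ->
  (forall z, Z z -> {within I, continuous (u z)}) ->
  {within I, continuous (fun y => sumZ Z (u ^~ y))}.
Proof.
move=> sM uM uc; apply/within_continuousP => x Ix e e0.
have su y : I y -> summableZ Z (u ^~ y).
  by move=> Iy; apply: summableZ_le sM => z Zz; exact: uM.
have q0 : (fun y => sumZ Z (fun z => u z y - u z x)) @ within I (nbhs x) --> 0.
  apply: (tannery (M := fun z => M z * 2)); first exact: summableZMr.
    rewrite near_withinE; apply: nearW => y Iy z Zz.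
    exact: ler_normB_mul2 (uM _ _ Zz Iy) (uM _ _ Zz Ix).
  move=> z Zz; apply/cvgrPdist_le => e1 e10; rewrite near_withinE.
  have ux := (within_continuousP _ _).1 (uc z Zz) x Ix e1 e10.
  by apply: filterS ux => y uy Iy; rewrite sub0r normrN; exact: uy.
have /cvgrPdist_le/(_ e e0) := q0; rewrite near_withinE.
apply: filterS => y uy Iy; rewrite -sumZB; [|exact: su|exact: su].
by have := uy Iy; rewrite sub0r normrN.
Qed.

Lemma sumZ_quotient_unif Z (V I : set R) (F G : nat -> R -> R -> R) M :
  nbhs 0 V -> compact I -> summableZ Z M ->
  (forall z s x, Z z -> V s -> I x -> is_derive s 1 (F z ^~ x) (G z s x)) ->
  (forall z s x, Z z -> V s -> I x -> `|G z s x| <= M z) ->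
  (forall z, Z z -> {within V `*` I, continuous (fun p => G z p.1 p.2)}) ->
  forall e, 0 < e -> \forall s \near 0^', forall x, I x ->
    `|sumZ Z (fun z => (F z s x - F z 0 x) / s - G z 0 x)| <= e.
Proof.
move=> V0 cI sM Fd GM Gc; have [r r0 rV] := nbhs_dist_lt V0.
have mvt s z x : Z z -> I x -> s != 0 -> `|s| < r -> exists c,
    [/\ `|c| <= `|s|, V c & (F z s x - F z 0 x) / s - G z 0 x = G z c x - G z 0 x].
  move=> Zz Ix s0 sr.
  have Vy y : `|y - 0| <= `|s - 0| -> V y.
    by rewrite !subr0 => ys; apply: rV; rewrite subr0; exact: le_lt_trans ys sr.
  have [c [cs ->]] := MVT_dist (fun y ys => Fd z y x Zz (Vy y ys) Ix).
  by exists c; split; [move: cs; rewrite !subr0 | exact: Vy | rewrite subr0 mulfK].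
apply: (tannery_unif (M := fun z => M z * 2)); first exact: summableZMr.
  near=> s => z x Zz Ix; have s0 : s != 0 by near: s; exact: nbhs_dnbhs_neq.
  have [|c [_ Vc ->]] := mvt s z x Zz Ix s0; first by near: s; exact: dnbhs0_lt.
  by apply: ler_normB_mul2; apply: GM => //; exact: nbhs_singleton.
move=> z Zz e e0.
have /nbhs_dist_lt[r' r'0 Gr'] := cvg_slice_uniform V0 cI (Gc z Zz) e0.
near=> s => x Ix; have s0 : s != 0 by near: s; exact: nbhs_dnbhs_neq.
have [|c [cs _ ->]] := mvt s z x Zz Ix s0; first by near: s; exact: dnbhs0_lt.
apply: Gr' => //; rewrite subr0; apply: le_lt_trans cs _.
by near: s; exact: dnbhs0_lt.
Unshelve. all: by end_near.
Qed.

End termwise.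

Section schwarz.
Variable R : realType.

Lemma continuous_within_nbhs {T : topologicalType} (A : set T) (f : T -> R) x :
  nbhs x A -> {within A, continuous f} -> {for x, continuous f}.
Proof.
move=> Ax /within_continuousP cf; apply/cvgrPdist_le => e e0.
have := cf x (nbhs_singleton Ax) e e0.
by apply: filterS2 Ax => y Ay /(_ Ay); rewrite distrC.
Qed.

Lemma itv_cc_dist_le (u s y : R) : `[u, u + s]%classic y -> `|y - u| <= s.
Proof.
by rewrite /= in_itv /= => /andP[uy ys]; rewrite ger0_norm ?subr_ge0 // lerBlDl.
Qed.

Lemma second_difference_MVT (p d2 d21 : R -> R -> R) (U W : set R) u v s t :
  0 < s -> 0 < t -> `[u, u + s]%classic `<=` U -> `[v, v + t]%classic `<=` W ->
  (forall e y, U e -> W y -> is_derive y 1 (p e) (d2 e y)) ->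
  (forall e y, U e -> W y -> is_derive e 1 (d2 ^~ y) (d21 e y)) ->
  exists2 xi, `[u, u + s]%classic xi & exists2 eta, `[v, v + t]%classic eta &
    p (u + s) (v + t) - p u (v + t) - p (u + s) v + p u v = d21 xi eta * s * t.
Proof.
move=> s0 t0 sU tW p2 p21.
have us : u < u + s by rewrite ltrDl.
have vt : v < v + t by rewrite ltrDl.
have [Uu Uus] : U u /\ U (u + s).
  by split; apply: sU; rewrite /= in_itv /= lexx ltW.
have [eta /subset_itv_oo_cc etav E1] := MVT_is_derive vt tW
  (fun y Wy => is_deriveB (p2 _ _ Uus Wy) (p2 _ _ Uu Wy)).
have [xi /subset_itv_oo_cc xiu E2] := MVT_is_derive us sU
  (fun e Ue => p21 e eta Ue (tW _ etav)).
exists xi => //; exists eta => //.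
have -> : p (u + s) (v + t) - p u (v + t) - p (u + s) v + p u v =
    (p (u + s) (v + t) - p u (v + t)) - (p (u + s) v - p u v) by ring.
by rewrite E1 E2; ring.
Qed.

(* The second difference is symmetric in the two variables, so applying this in
   both orders of differentiation identifies the two mixed partials. *)
Lemma second_difference_cvg (p d2 d21 : R -> R -> R) (U W : set R) u v :
  nbhs u U -> nbhs v W ->
  (forall e y, U e -> W y -> is_derive y 1 (p e) (d2 e y)) ->
  (forall e y, U e -> W y -> is_derive e 1 (d2 ^~ y) (d21 e y)) ->
  {for (u, v), continuous (fun q => d21 q.1 q.2)} ->
  (fun s => (p (u + s) (v + s) - p u (v + s) - p (u + s) v + p u v) / (s * s))
    @ 0^'+ --> d21 u v.
Proof.
move=> Uu Wv p2 p21 c21; apply/cvgrPdist_le => e e0.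
have /cvgrPdist_le/(_ e e0)/nbhs_ballP[r r0 near_uv] := c21.
have [rU rU0 ballU] := nbhs_dist_lt Uu; have [rW rW0 ballW] := nbhs_dist_lt Wv.
near=> s; have s0 : 0 < s by near: s; exact: nbhs_right_gt.
have sr : s < Num.min r (Num.min rU rW).
  by near: s; apply: nbhs_right_lt; rewrite !lt_min r0 rU0 rW0.
move: sr; rewrite !lt_min => /and3P[sr srU srW].
have sU : `[u, u + s]%classic `<=` U.
  by move=> y /itv_cc_dist_le ys; apply: ballU; exact: le_lt_trans ys srU.
have sW : `[v, v + s]%classic `<=` W.
  by move=> y /itv_cc_dist_le ys; apply: ballW; exact: le_lt_trans ys srW.
have [xi /itv_cc_dist_le xiu [eta /itv_cc_dist_le etav ->]] :=
  second_difference_MVT s0 s0 sU sW p2 p21.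
rewrite -[d21 xi eta * s * s]mulrA mulfK ?mulf_neq0 ?gt_eqF //; apply: (near_uv (xi, eta)).
by split; rewrite /ball /= distrC; exact: le_lt_trans _ sr.
Unshelve. all: by end_near.
Qed.

Lemma mixed_partials_eq (p dE dX dXE dEX : R -> R -> R) (U W : set R) u v :
  nbhs u U -> nbhs v W ->
  (forall e y, U e -> W y -> is_derive e 1 (p ^~ y) (dE e y)) ->
  (forall e y, U e -> W y -> is_derive y 1 (p e) (dX e y)) ->
  (forall e y, U e -> W y -> is_derive y 1 (dE e) (dXE e y)) ->
  (forall e y, U e -> W y -> is_derive e 1 (dX ^~ y) (dEX e y)) ->
  {for (u, v), continuous (fun q => dXE q.1 q.2)} ->
  {for (u, v), continuous (fun q => dEX q.1 q.2)} ->
  dXE u v = dEX u v.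
Proof.
move=> Uu Wv pE pX pXE pEX cXE cEX.
have cXE' : {for (v, u), continuous (fun q => dXE q.2 q.1)}.
  exact: continuous_comp (@swap_continuous _ _ (v, u)) cXE.
have := second_difference_cvg (p := fun y e => p e y) Wv Uu
  (fun y e Wy Ue => pE e y Ue Wy) (fun y e Wy Ue => pXE e y Ue Wy) cXE'.
move=> /(cvg_unique (@Rhausdorff R)); apply => /=.
apply: cvg_trans _ (second_difference_cvg Uu Wv pX pEX cEX).
by apply: near_eq_cvg; apply: nearW => s /=; congr (_ / _); ring.
Qed.

End schwarz.

Section C1.
Variable R : realType.
Implicit Types (a b : R) (f g : R -> R).

Lemma Ck_on_le (D : set R) j k f : (j <= k)%N -> Ck_on D k f -> Ck_on D j f.
Proof.
move=> jk [fs [<- [fc fd]]]; exists fs; split => //; split => [i ij|i ij].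
  exact/fc/(leq_trans ij).
exact/fd/(leq_trans ij).
Qed.

Lemma C1norm_le a b f e : a < b ->
  (forall x, `[a, b]%classic x -> `|f x| <= e) ->
  (forall x, `]a, b[%classic x -> `|derive1 f x| <= e) ->
  0 <= C1norm a b f <= e + e.
Proof.
move=> ab fe dfe; rewrite /C1norm.
set A := [set `|f x| | x in _]; set B := [set `|derive1 f x| | x in _].
have Aa : A `|f a| by exists a => //; rewrite /= in_itv /= lexx ltW.
have mab : `]a, b[%classic ((a + b) / 2) by rewrite /= in_itv /= !midf_lt.
have Bm : B `|derive1 f ((a + b) / 2)| by exists ((a + b) / 2).
have ubA : ubound A e by move=> _ [x xab <-]; exact: fe.
have ubB : ubound B e by move=> _ [x xab <-]; exact: dfe.
apply/andP; split; last first.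
  by apply: lerD; apply: ge_sup => //; [exists `|f a| | exists `|derive1 f ((a + b) / 2)|].
apply: addr_ge0.
  by apply: le_trans (normr_ge0 _) (ub_le_sup _ Aa); exists e.
by apply: le_trans (normr_ge0 _) (ub_le_sup _ Bm); exists e.
Qed.

Lemma eq_C1norm a b f g : (forall x, `[a, b]%classic x -> f x = g x) ->
  C1norm a b f = C1norm a b g.
Proof.
move=> fg; rewrite /C1norm; congr (sup _ + sup _); apply: eq_imagel => x xab.
  by rewrite fg.
rewrite !derive1E (@near_eq_derive _ _ _ _ g) //.
have : nbhs x `]a, b[%classic by apply: open_nbhs_nbhs; split => //; exact: itv_open.
by apply: filterS => y /subset_itv_oo_cc; exact: fg.
Qed.

Definition C1_derivative_at0 a b (F : R -> R -> R) (D : R -> R) :=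
  Ck_on `[a, b]%classic 1 D /\
  (fun e => C1norm a b (fun x => (F e x - F 0 x) / e - D x)) @ 0^' --> 0.

Lemma C1_derivative_at0_near_eq a b (F G : R -> R -> R) D :
  (\forall e \near 0, forall x, `[a, b]%classic x -> F e x = G e x) ->
  C1_derivative_at0 a b F D -> C1_derivative_at0 a b G D.
Proof.
move=> FG [DC1 FD]; split => //; apply: cvg_trans FD; apply: near_eq_cvg.
near=> e; apply: eq_C1norm => x xab; rewrite (nbhs_singleton FG) //.
suff -> : F e x = G e x by [].
by move: x xab; near: e; rewrite near_withinE; apply: filterS FG => ? + _.
Unshelve. all: by end_near.
Qed.

Lemma continuous_itv_cc_closed_image a b f (C : set R) : a < b -> closed C ->
  {within `[a, b]%classic, continuous f} ->
  (forall x, `]a, b[%classic x -> C (f x)) -> forall x, `[a, b]%classic x -> C (f x).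
Proof.
move=> ab cC cf fC; have [_ ca cb] := (continuous_within_itvP f ab).1 cf.
move=> x; rewrite /= in_itv /= => /andP[]; rewrite !le_eqVlt.
move=> /orP[/eqP<- _|ax /orP[/eqP->|xb]]; last by apply: fC; rewrite /= in_itv /= ax.
- apply: (closed_cvg _ cC _ _ ca); near=> y; apply: fC; rewrite /= in_itv /=.
  by apply/andP; split; near: y; [exact: nbhs_right_gt|exact: nbhs_right_lt].
- apply: (closed_cvg _ cC _ _ cb); near=> y; apply: fC; rewrite /= in_itv /=.
  by apply/andP; split; near: y; [exact: nbhs_left_gt|exact: nbhs_left_lt].
Unshelve. all: by end_near.
Qed.

End C1.

Section integral_sumZ.
Context {R : realType} {d : measure_display} {T : measurableType d}.
Variable mu : {measure set T -> \bar R}.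

Lemma nneseries_EFin_lim (u : nat -> R) : cvgn (series u) ->
  (\sum_(n <oo) (u n)%:E)%E = (limn (series u))%:E.
Proof.
move=> cu; rewrite -EFin_lim //; congr (limn _).
by apply/funext => n /=; rewrite /series /= sumEFin.
Qed.

(* For a divergent series both sides are junk: [limn] returns [0], and so does [fine +oo]. *)
Lemma lim_series_fine (u : nat -> R) : (forall n, 0 <= u n) ->
  limn (series u) = fine (\sum_(n <oo) (u n)%:E)%E.
Proof.
move=> u0; have [cu|ncu] := pselect (cvgn (series u)).
  by rewrite nneseries_EFin_lim.
suff -> : (\sum_(n <oo) (u n)%:E)%E = +oo%E by rewrite dvgP.
apply/eqP; rewrite eq_le leey /= leNgt; apply/negP => /(nnseries_is_cvg u0).
exact: ncu.
Qed.

Lemma Rintegral_sumZ (Z : set nat) (f : nat -> T -> R) (B : nat -> R) :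
  (forall z w, Z z -> 0 <= f z w) ->
  (forall z, Z z -> mu.-integrable setT (fun w => (f z w)%:E)) ->
  (forall z, Z z -> `|\int[mu]_w f z w| <= B z) -> summableZ Z B ->
  \int[mu]_w sumZ Z (f ^~ w) = sumZ Z (fun z => \int[mu]_w f z w).
Proof.
move=> f0 fi fB sB.
pose t n w := restrZ Z (f ^~ w) n.
have t0 n w : 0 <= t n w by rewrite /t /restrZ; case: ifPn => // /set_mem; exact: f0.
have mt n : measurable_fun setT (fun w => (t n w)%:E).
  rewrite /t /restrZ; case: (boolP (n \in Z)) => [/set_mem Zn|_].
    by have /integrableP[] := fi n Zn.
  exact: measurable_cst.
pose S w := (\sum_(n <oo) (t n w)%:E)%E.
have mS : measurable_fun setT S.
  by apply: ge0_emeasurable_sum => // n w _ _; rewrite lee_fin.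
have intS : (\int[mu]_w S w)%E = (sumZ Z (fun z => \int[mu]_w f z w))%:E.
  rewrite integral_nneseries //; last by move=> n w _; rewrite lee_fin.
  rewrite /sumZ -nneseries_EFin_lim; last exact: summableZ_le fB sB.
  apply: eq_eseriesr => n _; rewrite /t /restrZ; case: ifPn => [/set_mem Zn|_].
    by rewrite fineK //; exact: integrable_fin_num (fi n Zn).
  by rewrite integral0.
have S0 w : (0 <= S w)%E by apply: nneseries_ge0 => n _ _; rewrite lee_fin.
have iS : mu.-integrable setT S.
  apply/integrableP; split => //; under eq_integral do rewrite gee0_abs //.
  by rewrite intS ltry.
have Sfin : ae_eq mu setT (fun w => (fine (S w))%:E) S.
  by apply: filterS (integrable_ae measurableT iS) => w Sw _; rewrite fineK // Sw.
have -> : (fun w => sumZ Z (f ^~ w)) = (fun w => fine (S w)).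
  by apply/funext => w; rewrite /sumZ lim_series_fine // => n; exact: t0.
rewrite /Rintegral (ae_eq_integral S) ?intS //.
by apply/measurable_EFinP; exact: measurableT_comp.
Qed.

End integral_sumZ.

Section sumZ_C1_derivative.
Variables (R : realType) (a b : R) (V : set R) (Z : set nat).
Variables (p dE dX dXE dEX : nat -> R -> R -> R) (M0 M1 N0 N1 : nat -> R).
Hypotheses (ab : a < b) (oV : open V) (V0 : V 0).
Hypothesis B1 : forall z, Z z ->
  [/\ (forall e x, V e -> `[a, b]%classic x -> is_derive e 1 (p z ^~ x) (dE z e x)),
      (forall e x, V e -> `]a, b[%classic x -> is_derive x 1 (p z e) (dX z e x)),
      (forall e x, V e -> `]a, b[%classic x -> is_derive x 1 (dE z e) (dXE z e x)),
      (forall e x, V e -> `[a, b]%classic x -> is_derive e 1 (dX z ^~ x) (dEX z e x)) &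
      [/\ {within V `*` `[a, b]%classic, continuous (fun q => dE z q.1 q.2)},
          {within V `*` `[a, b]%classic, continuous (fun q => dX z q.1 q.2)},
          {within V `*` `[a, b]%classic, continuous (fun q => dXE z q.1 q.2)},
          {within V `*` `[a, b]%classic, continuous (fun q => dEX z q.1 q.2)} &
          (forall e x, V e -> `[a, b]%classic x ->
             `|dE z e x| <= M0 z /\ `|dEX z e x| <= M1 z)]].
Hypotheses (sM0 : summableZ Z M0) (sM1 : summableZ Z M1).
Hypothesis B2 : forall z, Z z ->
  (forall e x, V e -> `[a, b]%classic x -> `|p z e x| <= N0 z) /\
  (forall e x, V e -> `]a, b[%classic x -> `|dX z e x| <= N1 z).
Hypotheses (sN0 : summableZ Z N0) (sN1 : summableZ Z N1).

Let V0n : nbhs 0 V. Proof. exact: open_nbhs_nbhs. Qed.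

Let itvoo_nbhs x : `]a, b[%classic x -> nbhs x `]a, b[%classic.
Proof. by move=> xab; apply: open_nbhs_nbhs; split => //; exact: itv_open. Qed.

Let itvoo_cc : `]a, b[%classic `<=` `[a, b]%classic.
Proof. exact: subset_itv_oo_cc. Qed.

Let pE z e x : Z z -> V e -> `[a, b]%classic x -> is_derive e 1 (p z ^~ x) (dE z e x).
Proof. by move=> /B1[+ _ _ _ _]; apply. Qed.

Let pX z e x : Z z -> V e -> `]a, b[%classic x -> is_derive x 1 (p z e) (dX z e x).
Proof. by move=> /B1[_ + _ _ _]; apply. Qed.

Let pXE z e x : Z z -> V e -> `]a, b[%classic x -> is_derive x 1 (dE z e) (dXE z e x).
Proof. by move=> /B1[_ _ + _ _]; apply. Qed.

Let pEX z e x : Z z -> V e -> `[a, b]%classic x -> is_derive e 1 (dX z ^~ x) (dEX z e x).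
Proof. by move=> /B1[_ _ _ + _]; apply. Qed.

Let cdE z : Z z -> {within V `*` `[a, b]%classic, continuous (fun q => dE z q.1 q.2)}.
Proof. by case/B1 => _ _ _ _ []. Qed.

Let cdXE z : Z z -> {within V `*` `[a, b]%classic, continuous (fun q => dXE z q.1 q.2)}.
Proof. by case/B1 => _ _ _ _ []. Qed.

Let cdEX z : Z z -> {within V `*` `[a, b]%classic, continuous (fun q => dEX z q.1 q.2)}.
Proof. by case/B1 => _ _ _ _ []. Qed.

Let dEM0 z e x : Z z -> V e -> `[a, b]%classic x -> `|dE z e x| <= M0 z.
Proof. by case/B1 => _ _ _ _ [_ _ _ _ M] Ve xab; case: (M e x Ve xab). Qed.

Let dEXM1 z e x : Z z -> V e -> `[a, b]%classic x -> `|dEX z e x| <= M1 z.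
Proof. by case/B1 => _ _ _ _ [_ _ _ _ M] Ve xab; case: (M e x Ve xab). Qed.

Let pN0 z e x : Z z -> V e -> `[a, b]%classic x -> `|p z e x| <= N0 z.
Proof. by case/B2 => + _; apply. Qed.

Let dXN1 z e x : Z z -> V e -> `]a, b[%classic x -> `|dX z e x| <= N1 z.
Proof. by case/B2 => _; apply. Qed.

Let summable_p e x : V e -> `[a, b]%classic x -> summableZ Z (fun z => p z e x).
Proof. by move=> Ve xab; apply: summableZ_le sN0 => z Zz; exact: pN0. Qed.

Let summable_dX e x : V e -> `]a, b[%classic x -> summableZ Z (fun z => dX z e x).
Proof. by move=> Ve xab; apply: summableZ_le sN1 => z Zz; exact: dXN1. Qed.

Let summable_dE0 x : `[a, b]%classic x -> summableZ Z (fun z => dE z 0 x).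
Proof. by move=> xab; apply: summableZ_le sM0 => z Zz; exact: dEM0. Qed.

Let summable_dEX0 x : `[a, b]%classic x -> summableZ Z (fun z => dEX z 0 x).
Proof. by move=> xab; apply: summableZ_le sM1 => z Zz; exact: dEXM1. Qed.

Let F e x := sumZ Z (fun z => p z e x).
Let D x := sumZ Z (fun z => dE z 0 x).

Lemma sumZ_is_derive_x e x : V e -> `]a, b[%classic x ->
  is_derive x 1 (F e) (sumZ Z (fun z => dX z e x)).
Proof.
move=> Ve xab; apply: (is_derive_sumZ (phi := fun z y => p z e y)
  (dphi := fun z y => dX z e y) (itvoo_nbhs xab) sN0 sN1) => z y Zz yab.
- exact: pN0 Zz Ve (itvoo_cc yab).
- exact: pX Zz Ve yab.
- exact: dXN1 Zz Ve yab.
Qed.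

Lemma mixed_partials_at0 z x : Z z -> `]a, b[%classic x -> dXE z 0 x = dEX z 0 x.
Proof.
move=> Zz xab; have box : nbhs (0, x) (V `*` `[a, b]%classic).
  exists (V, `[a, b]%classic) => //; split => //=.
  exact: filterS (itvoo_nbhs xab).
exact: (mixed_partials_eq V0n (itvoo_nbhs xab) (fun e y Ve yab => pE Zz Ve (itvoo_cc yab))
  (fun e y Ve yab => pX Zz Ve yab) (fun e y Ve yab => pXE Zz Ve yab)
  (fun e y Ve yab => pEX Zz Ve (itvoo_cc yab))
  (continuous_within_nbhs box (cdXE Zz)) (continuous_within_nbhs box (cdEX Zz))).
Qed.

Lemma D_is_derive x : `]a, b[%classic x -> is_derive x 1 D (sumZ Z (fun z => dEX z 0 x)).
Proof.
move=> xab; apply: (is_derive_sumZ (phi := fun z y => dE z 0 y)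
  (dphi := fun z y => dEX z 0 y) (itvoo_nbhs xab) sM0 sM1) => z y Zz yab.
- exact: dEM0 Zz V0 (itvoo_cc yab).
- by rewrite -(mixed_partials_at0 Zz yab); exact: pXE Zz V0 yab.
- exact: dEXM1 Zz V0 (itvoo_cc yab).
Qed.

Lemma D_C1 : Ck_on `[a, b]%classic 1 D.
Proof.
exists (fun n => if n is 0 then D else fun x => sumZ Z (fun z => dEX z 0 x)).
split; first by []; split; last first.
  by case=> [_ x|//]; rewrite interior_itv_bnd; exact: D_is_derive.
case=> [_|[_|//]].
- apply: (continuous_sumZ (u := fun z y => dE z 0 y) sM0) => [z y Zz yab|z Zz].
    exact: dEM0 Zz V0 yab.
  exact: continuous_within_slice (cdE Zz) V0.
- apply: (continuous_sumZ (u := fun z y => dEX z 0 y) sM1) => [z y Zz yab|z Zz].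
    exact: dEXM1 Zz V0 yab.
  exact: continuous_within_slice (cdEX Zz) V0.
Qed.

Lemma diff_quotient_is_derive s x : V s -> `]a, b[%classic x ->
  is_derive x 1 (fun y => (F s y - F 0 y) / s - D y)
    ((sumZ Z (fun z => dX z s x) - sumZ Z (fun z => dX z 0 x)) / s -
     sumZ Z (fun z => dEX z 0 x)).
Proof.
move=> Vs xab.
have -> : (fun y => (F s y - F 0 y) / s - D y) = s^-1 \*: (F s - F 0) - D.
  by apply/funext => y /=; rewrite mulrC.
apply: is_derive_eq (is_deriveB (is_deriveZ s^-1 (is_deriveB (sumZ_is_derive_x Vs xab)
  (sumZ_is_derive_x V0 xab))) (D_is_derive xab)) _.
by rewrite -[s^-1 *: _]/(s^-1 * _) mulrC.
Qed.

Theorem sumZ_C1_derivative_at0 : C1_derivative_at0 a b F D.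
Proof.
split; first exact: D_C1.
apply/cvgrPdist_le => e e0; have e20 : 0 < e / 2 by rewrite divr_gt0.
have cab := @segment_compact R a b.
have p_unif := sumZ_quotient_unif V0n cab sM0 pE dEM0 cdE e20.
have dX_unif := sumZ_quotient_unif V0n cab sM1 pEX dEXM1 cdEX e20.
near=> s; have Vs : V s by near: s; rewrite near_withinE; apply: filterS V0n => t Vt _.
have p_s : forall x, `[a, b]%classic x ->
    `|sumZ Z (fun z => (p z s x - p z 0 x) / s - dE z 0 x)| <= e / 2 by near: s.
have dX_s : forall x, `[a, b]%classic x ->
    `|sumZ Z (fun z => (dX z s x - dX z 0 x) / s - dEX z 0 x)| <= e / 2 by near: s.
have values x : `[a, b]%classic x -> `|(F s x - F 0 x) / s - D x| <= e / 2.
  move=> xab; rewrite /F /D -sumZ_quotB; first exact: p_s.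
  - exact: summable_p Vs xab.
  - exact: summable_p V0 xab.
  - exact: summable_dE0 xab.
have derivatives x : `]a, b[%classic x ->
    `|derive1 (fun y => (F s y - F 0 y) / s - D y) x| <= e / 2.
  move=> xab; rewrite derive1E (@derive_val _ _ _ _ _ _ _ (diff_quotient_is_derive Vs xab)).
  rewrite -sumZ_quotB; first exact/dX_s/itvoo_cc.
  - exact: summable_dX Vs xab.
  - exact: summable_dX V0 xab.
  - exact/summable_dEX0/itvoo_cc.
have /andP[C0 Cle] := C1norm_le ab values derivatives.
by rewrite sub0r normrN ger0_norm // [leRHS](splitr e).
Unshelve. all: by end_near.
Qed.

End sumZ_C1_derivative.

Unset Implicit Arguments. Set Strict Implicit.

Theorem lemma2p4
  (R : realType) (a b : R) (d : measure_display) (Omega : measurableType d)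
  (Z : set nat)
  (T : Omega -> R -> R)                 (* the maps T_omega *)
  (c e : nat -> Omega -> R)             (* branch domain I_{z,w} = ]c z w, e z w[ *)
  (g g1 : nat -> Omega -> R -> R)       (* inverse branches g_{z,w} and their derivatives *)
  (V : set R) (P : R -> probability Omega R)
  (h : R -> R -> R)                     (* stationary densities h_eps *)
  (* ---- setting ---- *)
  (hab : a < b)
  (hV : open V) (hV0 : V 0)
  (hI : forall w z, Z z -> c z w < e z w /\ `]c z w, e z w[%classic `<=` `[a, b]%classic)
  (hdisj : forall w z z', Z z -> Z z' -> z <> z' ->
     `]c z w, e z w[%classic `&` `]c z' w, e z' w[%classic = set0)
  (hcover : forall w, lebesgue_measure
     (`[a, b]%classic `\` \bigcup_(z in Z) `]c z w, e z w[%classic) = 0%E)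
  (hTC3 : forall w z, Z z -> Ck_on `]c z w, e z w[%classic 3 (T w))
  (hgC3 : forall w z, Z z -> exists fs, fs 0%N = g z w /\ fs 1%N = g1 z w /\
     Ck_fam `[a, b]%classic 3 fs)
  (hgonto : forall w z, Z z -> g z w @` `]a, b[%classic = `]c z w, e z w[%classic)
  (hTg : forall w z x, Z z -> `]a, b[%classic x -> T w (g z w x) = x)
  (hgT : forall w z y, Z z -> `]c z w, e z w[%classic y -> g z w (T w y) = y)
  (hgmeas : forall z x, Z z -> measurable_fun setT (fun w => g z w x))
  (hg1meas : forall z x, Z z -> measurable_fun setT (fun w => g1 z w x))
  (* ---- (B) ---- *)
  (hB_C1 : forall eps phi, V eps -> Ck_on `[a, b]%classic 1 phi ->
     Ck_on `[a, b]%classic 1 (Lop (P eps) Z g g1 phi))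
  (hB_gap : exists (theta C : R), 0 < theta < 1 /\ 0 < C /\
     forall eps phi n, V eps -> Ck_on `[a, b]%classic 1 phi ->
       (\int[lebesgue_measure]_(x in `[a, b]%classic) phi x) / (b - a) = 0 ->
       C1norm a b (iter n (Lop (P eps) Z g g1) phi) <= C * theta ^+ n * C1norm a b phi)
  (hB_h : forall eps, V eps ->
     [/\ Ck_on `[a, b]%classic 2 (h eps),
         (forall x, `[a, b]%classic x -> Lop (P eps) Z g g1 (h eps) x = h eps x),
         (forall x, `[a, b]%classic x -> 0 <= h eps x),
         (\int[lebesgue_measure]_(x in `[a, b]%classic) h eps x) / (b - a) = 1 &
         forall h' : R -> R,
           lebesgue_measure.-integrable `[a, b]%classic (EFin \o h') ->
           (forall x, `[a, b]%classic x -> 0 <= h' x) ->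
           (\int[lebesgue_measure]_(x in `[a, b]%classic) h' x) / (b - a) = 1 ->
           {ae lebesgue_measure, forall x, `[a, b]%classic x ->
              Lop (P eps) Z g g1 h' x = h' x} ->
           {ae lebesgue_measure, forall x, `[a, b]%classic x -> h' x = h eps x}])
  (* ---- (B1) for Phi = h_0 ---- *)
  (hB1 : exists (dE dX dXE dEX : nat -> R -> R -> R) (M0 M1 : nat -> R),
     (forall z, Z z ->
       [/\ (forall eps x, V eps -> `[a, b]%classic x ->
             is_derive eps 1 (fun eps' => psi P g g1 (h 0) z eps' x) (dE z eps x)),
           (forall eps x, V eps -> `]a, b[%classic x ->
             is_derive x 1 (psi P g g1 (h 0) z eps) (dX z eps x)),
           (forall eps x, V eps -> `]a, b[%classic x ->
             is_derive x 1 (dE z eps) (dXE z eps x)),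
           (forall eps x, V eps -> `[a, b]%classic x ->
             is_derive eps 1 (fun eps' => dX z eps' x) (dEX z eps x)) &
           [/\ {within V `*` `[a, b]%classic, continuous (fun p => dE z p.1 p.2)},
               {within V `*` `[a, b]%classic, continuous (fun p => dX z p.1 p.2)},
               {within V `*` `[a, b]%classic, continuous (fun p => dXE z p.1 p.2)},
               {within V `*` `[a, b]%classic, continuous (fun p => dEX z p.1 p.2)} &
               (forall eps x, V eps -> `[a, b]%classic x ->
                  `|dE z eps x| <= M0 z /\ `|dEX z eps x| <= M1 z)]]) /\
     summableZ Z M0 /\ summableZ Z M1)
  (* ---- (B2) ---- *)
  (hB2 : forall Phi, Ck_on `[a, b]%classic 1 Phi ->
     exists (dX : nat -> R -> R -> R) (M0 M1 : nat -> R),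
     (forall z, Z z ->
       [/\ (forall eps x, V eps -> `[a, b]%classic x ->
             (P eps).-integrable setT
               (fun w => (Phi (g z w x) * `|g1 z w x|)%:E)),
           (forall eps x, V eps -> `]a, b[%classic x ->
             is_derive x 1 (psi P g g1 Phi z eps) (dX z eps x)),
           {within V `*` `[a, b]%classic, continuous (fun p => psi P g g1 Phi z p.1 p.2)},
           {within V `*` `[a, b]%classic, continuous (fun p => dX z p.1 p.2)} &
           (forall eps x, V eps -> `[a, b]%classic x ->
              `|psi P g g1 Phi z eps x| <= M0 z /\ `|dX z eps x| <= M1 z)]) /\
     summableZ Z M0 /\ summableZ Z M1) :
  (* ---- conclusion: eps |-> L_{P_eps} h_0 is differentiable at 0 in C^1 ---- *)
  exists D : R -> R,
    Ck_on `[a, b]%classic 1 D /\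
    (\forall eps \near 0, Ck_on `[a, b]%classic 1 (Lop (P eps) Z g g1 (h 0))) /\
    (fun eps => C1norm a b (fun x =>
        (Lop (P eps) Z g g1 (h 0) x - Lop (P 0) Z g g1 (h 0) x) / eps - D x))
      @ 0^' --> 0.
Proof.
have [h0C2 _ h0_ge0 _ _] := hB_h 0 hV0.
have h0C1 := Ck_on_le (leqnSn 1) h0C2.
have [dX [N0 [N1 [B2 [sN0 sN1]]]]] := hB2 (h 0) h0C1.
have [dE [dX' [dXE [dEX [M0 [M1 [B1 [sM0 sM1]]]]]]]] := hB1.
have g_ab w z x : Z z -> `[a, b]%classic x -> `[a, b]%classic (g z w x).
  move=> Zz; have [fs [fs0 [_ [fc _]]]] := hgC3 w z Zz.
  have cg : {within `[a, b]%classic, continuous (g z w)} by rewrite -fs0; exact: fc.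
  apply: (continuous_itv_cc_closed_image hab (@itv_closed _ _ a b) cg) => y yab.
  by apply: (hI w z Zz).2; rewrite -(hgonto w z Zz); exists y.
have LopE : \forall eps \near 0, forall x, `[a, b]%classic x ->
    sumZ Z (fun z => psi P g g1 (h 0) z eps x) = Lop (P eps) Z g g1 (h 0) x.
  near=> eps; move=> x xab; have Veps : V eps by near: eps; exact: open_nbhs_nbhs.
  apply/esym/(Rintegral_sumZ (B := N0)) => // [z w Zz|z /B2[+ _ _ _ _]|z /B2[_ _ _ _ +]].
  - by rewrite mulr_ge0 // h0_ge0 //; apply: g_ab.
  - exact.
  - by move=> /(_ eps x Veps xab)[].
have B2' z : Z z ->
    (forall eps x, V eps -> `[a, b]%classic x -> `|psi P g g1 (h 0) z eps x| <= N0 z) /\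
    (forall eps x, V eps -> `]a, b[%classic x -> `|dX' z eps x| <= N1 z).
  move=> Zz; have [_ dXz _ _ bz] := B2 z Zz; have [_ dX'z _ _ _] := B1 z Zz.
  split=> eps x Veps xab; first exact: (bz eps x Veps xab).1.
  rewrite -(@derive_val _ _ _ _ _ _ _ (dX'z eps x Veps xab)).
  rewrite (@derive_val _ _ _ _ _ _ _ (dXz eps x Veps xab)).
  exact: (bz eps x Veps (subset_itv_oo_cc xab)).2.
have [DC1 dLop] := C1_derivative_at0_near_eq LopE
  (sumZ_C1_derivative_at0 hab hV hV0 B1 sM0 sM1 B2' sN0 sN1).
exists (fun x => sumZ Z (fun z => dE z 0 x)); split => //; split => //.
near=> eps; apply: hB_C1 h0C1; near: eps; exact: open_nbhs_nbhs.
Unshelve. all: by end_near.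
Qed.
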